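(* Let $G=(V,E)$ be a graph with maximum degree $\Delta$ and let $h\le\log\Delta$ be a nonnegative integer. Assuming the base case of Procedure Edge-Coloring produces a proper $(\Delta'+1)$-edge-coloring of its input (of maximum degree $\Delta'$), Procedure Edge-Coloring$(G,h)$ computes a proper $(\Delta+3\cdot 2^h)$-edge-coloring of $G$.
   Context: Logarithms are base 2. A proper $k$-edge-coloring of $G$ is a map $\varphi:E\to\{1,\dots,k\}$ with $\varphi(e)\ne\varphi(e')$ for distinct edges sharing an endpoint. A degree-splitting of $H$ with discrepancy $\kappa$ is a partition $(E_1,E_2)$ of $E(H)$ with $|\deg_{E_1}(v)-\deg_{E_2}(v)|\le\kappa$ for every vertex $v$. Procedure Edge-Coloring$(H,h)$: if $h=0$, return a proper $(\Delta(H)+1)$-edge-coloring of $H$ with palette $\{1,\dots,\Delta(H)+1\}$ computed by a base-case subroutine. Otherwise compute a degree-splitting $(E_1,E_2)$ of $H$ with discrepancy at most 2 and $\{|E_1|,|E_2|\}=\{\lfloor |E(H)|/2\rfloor,\lceil |E(H)|/2\rceil\}$; let $H_1=(V(H),E_1)$, $H_2=(V(H),E_2)$ (isolated vertices discarded); compute $\varphi_1=$ Edge-Coloring$(H_1,h-1)$, $\varphi_2=$ Edge-Coloring$(H_2,h-1)$; return $\varphi(e)=\varphi_1(e)$ for $e\in E_1$ and $\varphi(e)=p_1+\varphi_2(e)$ for $e\in E_2$, where $p_1$ is the palette size of $\varphi_1$ (the palette of $\varphi$ has size $p_1+p_2$). *)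

From mathcomp Require Import all_boot.
Set Implicit Arguments. Unset Strict Implicit. Unset Printing Implicit Defensive.

Section Defs.
Variable V : finType.

(* A (simple) graph on vertex type V is given by its edge set: a set of
   2-element subsets of V. Isolated vertices play no role. *)
Definition is_graph (E : {set {set V}}) : Prop := forall e, e \in E -> #|e| = 2.

Definition deg (H : {set {set V}}) (v : V) : nat := #|[set e in H | v \in e]|.

Definition maxdeg (H : {set {set V}}) : nat := \max_(v : V) deg H v.

Definition proper_edge_coloring (H : {set {set V}}) (k : nat)
    (phi : {set V} -> nat) : Prop :=
  (forall e, e \in H -> 1 <= phi e <= k) /\
  (forall e e', e \in H -> e' \in H -> e != e' ->
     (exists v, (v \in e) && (v \in e')) -> phi e != phi e').

Definition balanced_split (H E1 E2 : {set {set V}}) : Prop :=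
  [/\ E1 :|: E2 = H, E1 :&: E2 = set0,
      (forall v, deg E1 v <= deg E2 v + 2 /\ deg E2 v <= deg E1 v + 2) &
      ((#|E1| = #|H|./2 /\ #|E2| = uphalf #|H|) \/
       (#|E1| = uphalf #|H| /\ #|E2| = #|H|./2))].

(* edge_coloring H h phi p : (phi, p) is a possible output (coloring, palette
   size) of Procedure Edge-Coloring(H, h), for any admissible choice of the
   degree-splittings and any base-case output that is a proper
   (Delta(H')+1)-edge-coloring of its input H'. *)
Inductive edge_coloring :
    {set {set V}} -> nat -> ({set V} -> nat) -> nat -> Prop :=
| EC_base H phi :
    proper_edge_coloring H (maxdeg H).+1 phi ->
    edge_coloring H 0 phi (maxdeg H).+1
| EC_step H h E1 E2 phi1 p1 phi2 p2 :
    balanced_split H E1 E2 ->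
    edge_coloring E1 h phi1 p1 ->
    edge_coloring E2 h phi2 p2 ->
    edge_coloring H h.+1
      (fun e => if e \in E1 then phi1 e else p1 + phi2 e) (p1 + p2).

End Defs.

From mathcomp Require Import all_boot.
From mathcomp Require Import zify.

Set Implicit Arguments.
Unset Strict Implicit.
Unset Printing Implicit Defensive.

(* Induction on h with the invariant  p + 2 <= Delta(H) + 3 * 2^h  for the
   palette size p.  The base case has p = Delta + 1.  In a split with
   discrepancy 2 every vertex has degree at most (deg v + 2) / 2 on each side,
   so Delta(A) + Delta(B) <= Delta(H) + 2, and adding the invariants of the
   two halves gives the invariant for h + 1.  Properness is preserved because
   the two halves get disjoint palettes. *)

Section EdgeColoring.
Context {V : finType}.
Implicit Types H A B : {set {set V}}.

Lemma deg_le_maxdeg H v : deg H v <= maxdeg H.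
Proof. exact: (leq_bigmax v). Qed.

Lemma deg_disjointU A B v :
  A :&: B = set0 -> deg (A :|: B) v = deg A v + deg B v.
Proof.
move=> AB; rewrite /deg -[RHS]cardsUI.
have -> : [set e in A | v \in e] :&: [set e in B | v \in e] = set0.
  by apply/setP=> e; rewrite !inE andbACA andbb -in_setI AB inE.
rewrite cards0 addn0; apply: eq_card => e; rewrite !inE; exact: andb_orl.
Qed.

Lemma balanced_split_sym H A B :
  balanced_split H A B -> balanced_split H B A.
Proof.
case=> cover dis bal card; split; rewrite 1?setUC 1?setIC //.
- by move=> v; have [] := bal v.
- by case: card => -[]; [right | left].
Qed.

Lemma maxdeg_balanced_split H A B :
  balanced_split H A B -> (maxdeg A).*2 <= maxdeg H + 2.
Proof.
case=> <- dis bal _; apply: (big_ind (fun d => d.*2 <= _)) => // [x y|v _]; first lia.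
have := deg_le_maxdeg (A :|: B) v; rewrite deg_disjointU //.
by have := bal v; lia.
Qed.

Lemma proper_edge_coloring_widen H k k' phi :
  k <= k' -> proper_edge_coloring H k phi -> proper_edge_coloring H k' phi.
Proof.
move=> kk' [range props]; split=> // e eH.
by have /andP[-> /leq_trans->] := range e eH.
Qed.

Lemma proper_edge_coloring_disjointU A B p1 p2 phi1 phi2 :
  A :&: B = set0 ->
  proper_edge_coloring A p1 phi1 -> proper_edge_coloring B p2 phi2 ->
  proper_edge_coloring (A :|: B) (p1 + p2)
    (fun e => if e \in A then phi1 e else p1 + phi2 e).
Proof.
move=> dis [range1 props1] [range2 props2].
have inB e : e \in A :|: B -> e \notin A -> e \in B.
  by rewrite inE => /orP[->|].
split=> [e eH | e e' eH e'H ne meet].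
- case: ifP => [/range1 | /negbT/(inB e eH)/range2]; lia.
- case: ifP => e1; case: ifP => e'1.
  + exact: props1.
  + have := range1 e e1; have := range2 e' (inB e' e'H (negbT e'1)).
    by move=> ? ?; apply/eqP; lia.
  + have := range1 e' e'1; have := range2 e (inB e eH (negbT e1)).
    by move=> ? ?; apply/eqP; lia.
  + rewrite eqn_add2l; apply: props2 => //; exact: inB (negbT _).
Qed.

Lemma edge_coloring_proper H h phi p :
  edge_coloring H h phi p -> proper_edge_coloring H p phi.
Proof.
elim=> {H h phi p} // H h A B phi1 p1 phi2 p2 [<- dis _ _] _ col1 _ col2.
exact: proper_edge_coloring_disjointU.
Qed.

Lemma edge_coloring_palette H h phi p :
  edge_coloring H h phi p -> p + 2 <= maxdeg H + 3 * 2 ^ h.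
Proof.
elim=> {H h phi p} [H phi _ | H h A B phi1 p1 phi2 p2 bal _ pal1 _ pal2].
  by rewrite expn0; lia.
have := maxdeg_balanced_split bal.
have := maxdeg_balanced_split (balanced_split_sym bal).
by rewrite expnS; lia.
Qed.

End EdgeColoring.

Theorem lemma3p5 (V : finType) (E : {set {set V}}) (h : nat) :
  is_graph E -> 2 ^ h <= maxdeg E ->
  forall (phi : {set V} -> nat) (p : nat),
    edge_coloring E h phi p ->
    proper_edge_coloring E (maxdeg E + 3 * 2 ^ h) phi.
Proof.
(* The bound holds for every h. *)
move=> _ _ phi p col.
apply: proper_edge_coloring_widen (edge_coloring_proper col).
by have := edge_coloring_palette col; lia.
Qed.
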